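(* Let $O=\langle B,E,F,\mathsf c\rangle$ be an occurrence net with associated conflict relation $\#$. Let $B^{\#}=\{\{e,e'\}\mid e\ \#\ e'\}$ (a set of fresh conditions) and $F^{\#}=\{(A,e)\mid A\in B^{\#},\ e\in A\}$. Then $O^{\#}=\langle B\cup B^{\#},E,F\cup F^{\#},\mathsf c\cup B^{\#}\rangle$ is an occurrence net and $O$ and $O^{\#}$ have the same configurations (equivalently, the same states).
   Context: A net $N=\langle S,T,F,\mathsf m\rangle$ consists of disjoint sets $S$ (places) and $T$ (transitions), flow $F\subseteq(S\times T)\cup(T\times S)$ and initial marking $\mathsf m$; ${}^\bullet x=\{y\mid(y,x)\in F\}$, $x^\bullet=\{y\mid(x,y)\in F\}$. $t$ is enabled at $m$ if ${}^\bullet t\subseteq m$; firing yields $m-{}^\bullet t+t^\bullet$. A state is the multiset of transitions of a finite firing sequence from $\mathsf m$; for occurrence nets (identity labelling) configurations are the states. A net is safe if every reachable marking has at most one token per place. $<_N$ is the transitive closure of $F$ and $\le_N$ its reflexive closure; $N$ is acyclic if $\le_N$ is a partial order. An occurrence net $O=\langle B,E,F,\mathsf c\rangle$ is an acyclic safe net such that: for every $b\in B$, ${}^\bullet b$ is empty or a singleton, and ${}^\bullet b=\emptyset$ for $b\in\mathsf c$; for every $b\in B$ there is $b'\in\mathsf c$ with $b'\le_O b$; for every $e\in E$ the set $\{e'\in E\mid e'\le_O e\}$ is finite; and the conflict relation $\#$, defined by $e\ \#_0\ e'$ iff $e\neq e'$ and ${}^\bullet e\cap{}^\bullet e'\neq\emptyset$,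 and $x\ \#\ x'$ iff there are $y\ \#_0\ y'$ with $y\le_O x$, $y'\le_O x'$, is irreflexive. *)

From Stdlib Require Import List Relations Classical ClassicalEpsilon.
Import ListNotations.

Definition ind (P : Prop) : nat :=
  if excluded_middle_informative P then 1 else 0.

(* A (place/transition) net <S,T,F,m>: S and T are disjoint (distinct types),
   F is split into (S x T) part [pre] and (T x S) part [post];
   the initial marking is a multiset of places. *)
Record Net := mkNet {
  pl : Type;
  tr : Type;
  pre : pl -> tr -> Prop;
  post : tr -> pl -> Prop;
  init : pl -> nat
}.

Section NetDefs.
Variable N : Net.

Definition marking := pl N -> nat.

Definition enabled (m : marking) (t : tr N) : Prop :=
  forall s, pre N s t -> 1 <= m s.

Definition fire (m : marking) (t : tr N) (m' : marking) : Prop :=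
  enabled m t /\ forall s, m' s = m s - ind (pre N s t) + ind (post N t s).

Inductive fseq : list (tr N) -> marking -> Prop :=
| fseq_nil : fseq [] (init N)
| fseq_snoc l m t m' : fseq l m -> fire m t m' -> fseq (l ++ [t]) m'.

Definition reachable (m : marking) : Prop := exists l, fseq l m.

Fixpoint mult (l : list (tr N)) (t : tr N) : nat :=
  match l with
  | [] => 0
  | x :: l' => ind (x = t) + mult l' t
  end.

Definition state (X : tr N -> nat) : Prop :=
  exists l m, fseq l m /\ forall t, X t = mult l t.

Definition safe : Prop :=
  forall m, reachable m -> forall s, m s <= 1.

Definition node := (pl N + tr N)%type.

Definition flow (x y : node) : Prop :=
  match x, y with
  | inl s, inr t => pre N s t
  | inr t, inl s => post N t s
  | _, _ => False
  end.

Definition ltN : node -> node -> Prop := clos_trans node flow.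
Definition leN (x y : node) : Prop := x = y \/ ltN x y.

Definition acyclic : Prop :=
  reflexive node leN /\ transitive node leN /\ antisymmetric node leN.

Definition conflict0 (e e' : tr N) : Prop :=
  e <> e' /\ exists s, pre N s e /\ pre N s e'.

Definition conflict (x x' : node) : Prop :=
  exists y y', conflict0 y y' /\ leN (inr y) x /\ leN (inr y') x'.

End NetDefs.

(* Occurrence net data <B,E,F,c>, c a set of conditions *)
Record ONet := mkONet {
  cond : Type;
  ev : Type;
  opre : cond -> ev -> Prop;
  opost : ev -> cond -> Prop;
  oinit : cond -> Prop
}.

Definition net_of (O : ONet) : Net :=
  mkNet (cond O) (ev O) (opre O) (opost O) (fun b => ind (oinit O b)).

Definition is_occurrence_net (O : ONet) : Prop :=
  let N := net_of O in
  acyclic N /\ safe N /\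
  (forall b (e e' : ev O), opost O e b -> opost O e' b -> e = e') /\
  (forall b, oinit O b -> forall e, ~ opost O e b) /\
  (forall b, exists b', oinit O b' /\ leN N (inl b') (inl b)) /\
  (forall e : ev O, exists l : list (ev O),
      forall e', leN N (inr e') (inr e) -> In e' l) /\
  (forall x : node N, ~ conflict N x x).

Definition configuration (O : ONet) (X : ev O -> nat) : Prop :=
  state (net_of O) X.

(* B^# = { {e,e'} | e # e' }, as fresh conditions (subsets of E) *)
Definition Bsharp (O : ONet) : Type :=
  { A : ev O -> Prop | exists e e' : ev O,
      conflict (net_of O) (inr e) (inr e') /\
      A = (fun x => x = e \/ x = e') }.

Definition sharp (O : ONet) : ONet :=
  mkONet (cond O + Bsharp O)%type (ev O)
    (fun b e => match b with
                | inl b0 => opre O b0 e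
                | inr A => proj1_sig A e
                end)
    (fun e b => match b with
                | inl b0 => opost O e b0
                | inr _ => False
                end)
    (fun b => match b with
              | inl b0 => oinit O b0
              | inr _ => True
              end).

From Stdlib Require Import List Relations Classical ClassicalEpsilon.
From Stdlib Require Import Lia FunctionalExtensionality.
Import ListNotations.

(* Every node of O embeds into O^#, the fresh conditions
   {e,e'} have no incoming arcs, and the flow between embedded nodes is the
   flow of O.  Hence every causal path of O^# ends in (and, starting from an
   embedded node, stays inside) the image of O: acyclicity, finiteness of
   causes and the ancestor condition transfer, and a self-conflict of O^#
   induced by a fresh condition {e,e'} is an upward-propagated conflict
   e # e' of O, hence a self-conflict of O.

   Token counting (initial + produced = current + consumed)
   shows that in a safe net where conditions have unique producers and
   initial conditions are never produced, every condition receives at most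
   one token along a firing sequence.  Therefore firing sequences of O are
   downward closed and conflict free, and an event with a precondition
   never fires twice.  So when e fires, the fresh
   condition {e,e'} still carries its initial token: the firing sequences of
   O and O^# coincide, the marking of {e,e'} being 1 until e or e' fires.
   Safety of O^# follows from this correspondence. *)

Lemma ind_true (P : Prop) : P -> ind P = 1.
Proof. unfold ind; destruct (excluded_middle_informative P); tauto. Qed.

Lemma ind_false (P : Prop) : ~ P -> ind P = 0.
Proof. unfold ind; destruct (excluded_middle_informative P); tauto. Qed.

Lemma ind_le_1 (P : Prop) : ind P <= 1.
Proof. unfold ind; destruct (excluded_middle_informative P); lia. Qed.

Lemma ind_iff (P Q : Prop) : (P <-> Q) -> ind P = ind Q.
Proof.
  intros HPQ; unfold ind.
  destruct (excluded_middle_informative P), (excluded_middle_informative Q); tauto.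
Qed.

(* Removing a token that is certainly present. *)
Lemma ind_and_not (P Q : Prop) : (P -> Q) -> ind (Q /\ ~ P) = ind Q - ind P + ind False.
Proof.
  intros HPQ. rewrite (ind_false False) by tauto. destruct (classic P) as [HP|HP].
  - rewrite (ind_false (Q /\ ~ P)), (ind_true P HP), (ind_true Q (HPQ HP)) by tauto.
    reflexivity.
  - rewrite (ind_false P HP), (ind_iff (Q /\ ~ P) Q) by tauto. lia.
Qed.

Section Counting.
Variable A : Type.
Implicit Types (P : A -> Prop) (l : list A).

Fixpoint count_sat P l : nat :=
  match l with
  | [] => 0
  | x :: l' => ind (P x) + count_sat P l'
  end.

Lemma count_sat_snoc P l x : count_sat P (l ++ [x]) = count_sat P l + ind (P x).
Proof. induction l; simpl; lia. Qed.

Lemma count_sat_none P l : (forall x, ~ P x) -> count_sat P l = 0.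
Proof. intros HP; induction l; simpl; [|rewrite ind_false]; auto. Qed.

Lemma count_sat_In P l x : In x l -> P x -> 1 <= count_sat P l.
Proof.
  induction l as [|a l IH]; simpl; [tauto|]. intros [->|Hx] HPx.
  - rewrite (ind_true _ HPx); lia.
  - specialize (IH Hx HPx); lia.
Qed.

Lemma count_sat_witness P l : 1 <= count_sat P l -> exists x, In x l /\ P x.
Proof.
  induction l as [|a l IH]; simpl; [lia|]. intros Hcount.
  destruct (classic (P a)) as [HPa|HPa]; [exists a; auto|].
  rewrite (ind_false _ HPa) in Hcount. destruct (IH Hcount) as [x [Hx HPx]]; eauto.
Qed.

Lemma count_sat_two P l x y :
  In x l -> In y l -> x <> y -> P x -> P y -> 2 <= count_sat P l.
Proof.
  induction l as [|a l IH]; simpl; [tauto|]. intros Hx Hy Hxy HPx HPy.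
  destruct Hx as [<-|Hx].
  - destruct Hy as [->|Hy]; [congruence|].
    rewrite (ind_true _ HPx). pose proof (count_sat_In P l y Hy HPy); lia.
  - destruct Hy as [<-|Hy].
    + rewrite (ind_true _ HPy). pose proof (count_sat_In P l x Hx HPx); lia.
    + pose proof (IH Hx Hy Hxy HPx HPy); lia.
Qed.

End Counting.

Arguments count_sat {A}.

Section Causality.
Variable N : Net.

Lemma flow_irreflexive (x : node N) : ~ flow N x x.
Proof. destruct x; simpl; tauto. Qed.

Lemma ltN_last_step (u v : node N) : ltN N u v -> exists w, flow N w v.
Proof. intros Huv. apply clos_trans_tn1 in Huv. destruct Huv; eauto. Qed.

Lemma ltN_into_transition (u : node N) t : ltN N u (inr t) -> exists s, pre N s t.
Proof. intros H. destruct (ltN_last_step _ _ H) as [[s|t'] Hw]; simpl in Hw; eauto; tauto. Qed.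

Lemma ltN_into_place (u : node N) s : ltN N u (inl s) -> exists t, post N t s.
Proof. intros H. destruct (ltN_last_step _ _ H) as [[s'|t] Hw]; simpl in Hw; eauto; tauto. Qed.

Lemma leN_trans (x y z : node N) : leN N x y -> leN N y z -> leN N x z.
Proof.
  intros [<-|Hxy] [<-|Hyz]; [left| right| right| right; eapply t_trans]; eauto.
Qed.

Lemma acyclic_of_irreflexive : (forall x, ~ ltN N x x) -> acyclic N.
Proof.
  intros Hirr. split; [|split].
  - intros x; left; reflexivity.
  - intros x y z; apply leN_trans.
  - intros x y [E|Hxy] [E'|Hyx]; auto.
    exfalso; apply (Hirr x); eapply t_trans; eauto.
Qed.

Lemma acyclic_irreflexive : acyclic N -> forall x, ~ ltN N x x.
Proof.
  intros [_ [_ Hanti]] x Hxx. apply clos_trans_t1n in Hxx.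
  inversion Hxx as [x0 Hflow | w x0 Hflow Hwx]; subst.
  - exact (flow_irreflexive x Hflow).
  - assert (x = w) as <-.
    { apply Hanti; right; [apply t_step | apply clos_t1n_trans]; assumption. }
    exact (flow_irreflexive x Hflow).
Qed.

Lemma conflict_sym (x x' : node N) : conflict N x x' -> conflict N x' x.
Proof.
  intros [y [y' [[Hne [s [Hs Hs']]] [Hy Hy']]]].
  exists y', y; split; [split; [congruence | eauto] | auto].
Qed.

Lemma conflict_upward (x x' z z' : node N) :
  conflict N x x' -> leN N x z -> leN N x' z' -> conflict N z z'.
Proof.
  intros [y [y' [Hc [Hy Hy']]]] Hz Hz'.
  exists y, y'; split; [exact Hc | split; eapply leN_trans; eauto].
Qed.

Lemma conflict_has_pre t (x : node N) : conflict N (inr t) x -> exists s, pre N s t.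
Proof.
  intros [y [y' [[_ [s [Hs _]]] [[E|Hlt] _]]]].
  - injection E as <-; eauto.
  - exact (ltN_into_transition _ _ Hlt).
Qed.

End Causality.

Section TokenGame.
Variable N : Net.

Definition produced (s : pl N) (l : list (tr N)) : nat :=
  count_sat (fun t => post N t s) l.

Definition consumed (s : pl N) (l : list (tr N)) : nat :=
  count_sat (fun t => pre N s t) l.

Lemma token_balance l m :
  fseq N l m -> forall s, init N s + produced s l = m s + consumed s l.
Proof.
  induction 1 as [| l m t m' _ IH [Hen Hm']]; intros s; [reflexivity|].
  unfold produced, consumed in *. rewrite !count_sat_snoc, Hm'.
  specialize (IH s). destruct (classic (pre N s t)) as [Hp|Hp].
  - rewrite (ind_true _ Hp). specialize (Hen s Hp). lia.
  - rewrite (ind_false _ Hp). lia.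
Qed.

Lemma unproduced_place_bounded s l m :
  (forall t, ~ post N t s) -> fseq N l m -> m s <= init N s.
Proof.
  intros Hs Hl. pose proof (token_balance l m Hl s) as Hbal.
  unfold produced in Hbal. rewrite count_sat_none in Hbal by exact Hs. lia.
Qed.

(* In a safe net, an event without preconditions (which can fire again and
   again from the initial marking) produces nothing. *)
Lemma safe_empty_preset t :
  safe N -> (forall s, ~ pre N s t) -> forall s, ~ post N t s.
Proof.
  intros Hsafe Hpre s Hpost.
  set (step := fun m : marking N => fun s => m s - ind (pre N s t) + ind (post N t s)).
  assert (Hfire : forall m, fire N m t (step m)).
  { intros m; split; [intros s' Hs'; contradiction (Hpre s') | reflexivity]. }
  assert (Htwice : fseq N (([] ++ [t]) ++ [t]) (step (step (init N)))).
  { apply fseq_snoc with (step (init N)); [|apply Hfire].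
    apply fseq_snoc with (init N); [constructor | apply Hfire]. }
  specialize (Hsafe _ (ex_intro _ _ Htwice) s). unfold step in Hsafe.
  rewrite (ind_false _ (Hpre s)), (ind_true _ Hpost) in Hsafe. lia.
Qed.

End TokenGame.

Section SharpStructure.
Variable O : ONet.
Local Notation N := (net_of O).
Local Notation NS := (net_of (sharp O)).

Definition emb (x : node N) : node NS :=
  match x with inl b => inl (inl b) | inr e => inr e end.

Lemma emb_inj (x y : node N) : emb x = emb y -> x = y.
Proof. destruct x, y; simpl; intros E; inversion E; reflexivity. Qed.

(* Every arc of O^# ends in the image of O: fresh conditions are sources. *)
Lemma sharp_flow_target (u v : node NS) : flow NS u v -> exists y, v = emb y.
Proof.
  destruct u as [[b|A]|e], v as [[b'|A']|e']; simpl; try tauto; intros _.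
  - exists (inr e'); reflexivity.
  - exists (inr e'); reflexivity.
  - exists (inl b'); reflexivity.
Qed.

Lemma sharp_flow_from_emb (x : node N) (v : node NS) :
  flow NS (emb x) v -> exists y, v = emb y /\ flow N x y.
Proof.
  destruct x as [b|e], v as [[b'|A]|e']; simpl; try tauto; intros Hflow.
  - exists (inr e'); split; [reflexivity | exact Hflow].
  - exists (inl b'); split; [reflexivity | exact Hflow].
Qed.

Lemma sharp_lt_target (u v : node NS) : ltN NS u v -> exists y, v = emb y.
Proof. intros H. destruct (ltN_last_step _ _ _ H) as [w Hw]. exact (sharp_flow_target w v Hw). Qed.

Lemma sharp_lt_from_emb (x : node N) (w : node NS) :
  ltN NS (emb x) w -> exists y, w = emb y /\ ltN N x y.
Proof.
  intros H. apply clos_trans_tn1 in H.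
  induction H as [v Hflow | u v Hflow _ [y [-> Hxy]]].
  - destruct (sharp_flow_from_emb x v Hflow) as [y [-> Hy]].
    exists y; split; [reflexivity | apply t_step, Hy].
  - destruct (sharp_flow_from_emb y v Hflow) as [z [-> Hz]].
    exists z; split; [reflexivity | eapply t_trans; [exact Hxy | apply t_step, Hz]].
Qed.

Lemma sharp_lt_emb (x y : node N) : ltN NS (emb x) (emb y) <-> ltN N x y.
Proof.
  split.
  - intros H. destruct (sharp_lt_from_emb x _ H) as [z [E Hz]].
    apply emb_inj in E as ->. exact Hz.
  - induction 1 as [x y Hflow | x y z _ IHxy _ IHyz]; [|eapply t_trans; eauto].
    apply t_step. destruct x, y; exact Hflow.
Qed.

Lemma sharp_le_emb (x y : node N) : leN NS (emb x) (emb y) <-> leN N x y.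
Proof.
  unfold leN. rewrite sharp_lt_emb.
  split; intros [E|H]; auto; left; [apply emb_inj | subst]; auto.
Qed.

Lemma sharp_le_target (x : node N) (w : node NS) : leN NS (emb x) w -> exists y, w = emb y.
Proof.
  intros [<-|H]; [exists x; reflexivity|].
  destruct (sharp_lt_from_emb x w H) as [y [-> _]]; eauto.
Qed.

(* A cycle of O^# lies in the image of O, hence is a cycle of O. *)
Lemma sharp_acyclic : acyclic N -> acyclic NS.
Proof.
  intros Hac. apply acyclic_of_irreflexive. intros x Hxx.
  destruct (sharp_lt_target x x Hxx) as [z ->].
  exact (acyclic_irreflexive N Hac z (proj1 (sharp_lt_emb z z) Hxx)).
Qed.

Lemma fresh_pair_conflict (A : Bsharp O) (x y : ev O) :
  proj1_sig A x -> proj1_sig A y -> x <> y -> conflict N (inr x) (inr y).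
Proof.
  destruct A as [A [e [e' [Hc ->]]]]; simpl.
  intros [-> | ->] [-> | ->] Hxy; try congruence; auto using conflict_sym.
Qed.

Lemma fresh_member_has_pre (A : Bsharp O) (x : ev O) :
  proj1_sig A x -> exists c, opre O c x.
Proof.
  destruct A as [A [e [e' [Hc ->]]]]; simpl.
  intros [-> | ->]; [|apply conflict_sym in Hc]; exact (conflict_has_pre N _ _ Hc).
Qed.

(* A self-conflict of O^# is a self-conflict of O: a conflict created by a
   fresh condition {e,e'} is the conflict e # e' of O, propagated upwards. *)
Lemma sharp_conflict_irreflexive :
  (forall x, ~ conflict N x x) -> forall x, ~ conflict NS x x.
Proof.
  intros Hirr x [y [y' [[Hne [s [Hs Hs']]] [Hy Hy']]]].
  destruct (sharp_le_target (inr y) x Hy) as [z ->].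
  apply (sharp_le_emb (inr y)) in Hy. apply (sharp_le_emb (inr y')) in Hy'.
  apply (Hirr z). destruct s as [b|A].
  - exists y, y'; split; [split; [exact Hne | exists b; auto] | auto].
  - exact (conflict_upward N _ _ z z (fresh_pair_conflict A y y' Hs Hs' Hne) Hy Hy').
Qed.

Lemma fseq_of_sharp_fseq l (ms : marking NS) :
  fseq NS l ms -> fseq N l (fun b => ms (inl b)).
Proof.
  induction 1 as [| l ms t ms' _ IH [Hen Hms']]; [exact (fseq_nil N)|].
  apply (fseq_snoc N l (fun b => ms (inl b)) t); [exact IH|].
  split; [intros b Hb; exact (Hen (inl b) Hb) | intros b; exact (Hms' (inl b))].
Qed.

(* O^# is safe: its runs restrict to runs of O, and fresh conditions are
   never produced. *)
Lemma sharp_safe : safe N -> safe NS.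
Proof.
  intros Hsafe ms [l Hl] [b|A].
  - exact (Hsafe _ (ex_intro _ l (fseq_of_sharp_fseq l ms Hl)) b).
  - etransitivity; [apply (unproduced_place_bounded NS (inr A) l ms); [intros t []| exact Hl]|].
    apply ind_le_1.
Qed.

End SharpStructure.

Section OccurrenceDynamics.
Variable O : ONet.
Local Notation N := (net_of O).
Local Notation NS := (net_of (sharp O)).
Hypothesis Hsafe : safe N.
Hypothesis Hunique_producer : forall b (e e' : ev O), opost O e b -> opost O e' b -> e = e'.
Hypothesis Hinit_unproduced : forall b, oinit O b -> forall e, ~ opost O e b.

Lemma consumed_event_disabled l m t c :
  fseq N l m -> ind (oinit O c) + produced N c l <= 1 ->
  In t l -> opre O c t -> ~ enabled N m t.
Proof.
  intros Hl Hc Ht Hct Hen. pose proof (token_balance N l m Hl c) as Hbal.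
  pose proof (count_sat_In _ (fun x => opre O c x) l t Ht Hct).
  specialize (Hen c Hct). unfold consumed in Hbal. cbn in *. lia.
Qed.

Lemma produced_at_most_once l m :
  fseq N l m -> forall b, ind (oinit O b) + produced N b l <= 1.
Proof.
  induction 1 as [| l m t m' Hl IH [Hen _]]; intros b.
  { pose proof (ind_le_1 (oinit O b)); unfold produced; simpl; lia. }
  unfold produced in *. rewrite count_sat_snoc. cbn in *.
  destruct (classic (opost O t b)) as [Htb|Htb]; [|rewrite (ind_false _ Htb); specialize (IH b); lia].
  rewrite (ind_false _ (fun Hb => Hinit_unproduced b Hb t Htb)), (ind_true _ Htb).
  enough (count_sat (fun x => opost O x b) l = 0) by lia.
  destruct (count_sat _ l) eqn:Hcount; [reflexivity | exfalso].
  destruct (count_sat_witness _ (fun x => opost O x b) l) as [x [Hx Hxb]]; [lia|].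
  rewrite (Hunique_producer b x t Hxb Htb) in Hx.
  destruct (classic (exists c, opre O c t)) as [[c Hct]|Hnopre].
  - exact (consumed_event_disabled l m t c Hl (IH c) Hx Hct Hen).
  - exact (safe_empty_preset N t Hsafe (fun c Hct => Hnopre (ex_intro _ c Hct)) b Htb).
Qed.

Lemma event_fires_once l m t c :
  fseq N l m -> In t l -> opre O c t -> ~ enabled N m t.
Proof.
  intros Hl. exact (consumed_event_disabled l m t c Hl (produced_at_most_once l m Hl c)).
Qed.

Definition occurred (l : list (ev O)) (v : node N) : Prop :=
  match v with
  | inl c => exists x, In x l /\ opost O x c
  | inr e => In e l
  end.

Lemma consumed_was_available l m e c :
  fseq N l m -> In e l -> opre O c e -> oinit O c \/ occurred l (inl c).
Proof.
  intros Hl He Hce. pose proof (token_balance N l m Hl c) as Hbal.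
  pose proof (count_sat_In _ (fun x => opre O c x) l e He Hce).
  unfold produced, consumed in Hbal. cbn in *.
  destruct (classic (oinit O c)) as [Hc|Hc]; [left; exact Hc | right].
  rewrite (ind_false _ Hc) in Hbal. apply count_sat_witness. lia.
Qed.

Lemma occurred_downward_closed l m y (v : node N) :
  fseq N l m -> ltN N (inr y) v -> occurred l v -> In y l.
Proof.
  intros Hl Hyv. apply clos_trans_tn1 in Hyv.
  induction Hyv as [v Hflow | u v Hflow Hyu IH].
  - destruct v as [c|e]; simpl in *; [|tauto].
    intros [x [Hx Hxc]]. rewrite <- (Hunique_producer c x y Hxc Hflow). exact Hx.
  - destruct u as [c'|e'], v as [c|e]; simpl in Hflow; try tauto; intros Hv; apply IH; simpl in Hv |- *.
    + destruct (consumed_was_available l m e c' Hl Hv Hflow) as [Hinit|Hproduced]; [|exact Hproduced].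
      apply clos_tn1_trans in Hyu. destruct (ltN_into_place N _ _ Hyu) as [z Hz].
      contradiction (Hinit_unproduced c' Hinit z Hz).
    + destruct Hv as [x [Hx Hxc]]. rewrite <- (Hunique_producer c x e' Hxc Hflow). exact Hx.
Qed.

Lemma configuration_downward_closed l m y e :
  fseq N l m -> leN N (inr y) (inr e) -> In e l -> In y l.
Proof.
  intros Hl [E|Hlt] He; [injection E as ->; exact He|].
  exact (occurred_downward_closed l m y (inr e) Hl Hlt He).
Qed.

(* Two events of a firing sequence are never in conflict: their conflicting
   causes would consume the same token twice. *)
Lemma configuration_conflict_free l m e e' :
  fseq N l m -> In e l -> In e' l -> ~ conflict N (inr e) (inr e').
Proof.
  intros Hl He He' [y [y' [[Hne [s [Hs Hs']]] [Hy Hy']]]].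
  pose proof (configuration_downward_closed l m y e Hl Hy He) as Hyl.
  pose proof (configuration_downward_closed l m y' e' Hl Hy' He') as Hyl'.
  pose proof (count_sat_two _ (fun x => opre O s x) l y y' Hyl Hyl' Hne Hs Hs').
  pose proof (token_balance N l m Hl s). pose proof (produced_at_most_once l m Hl s).
  unfold consumed in *. cbn in *. lia.
Qed.

(* The fresh condition A still holds its token as long as no member fired. *)
Definition untouched (l : list (ev O)) (A : Bsharp O) : Prop :=
  ~ exists x, In x l /\ proj1_sig A x.

Lemma untouched_snoc l t A :
  untouched (l ++ [t]) A <-> untouched l A /\ ~ proj1_sig A t.
Proof.
  unfold untouched. split.
  - intros Hnone; split.
    + intros [x [Hx HAx]]; apply Hnone; exists x; split; [apply in_or_app; left|]; assumption.
    + intros HAt; apply Hnone; exists t; split; [apply in_or_app; right; left|]; trivial.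
  - intros [Hnone HAt] [x [Hx HAx]].
    apply in_app_or in Hx as [Hx|[<-|[]]]; [apply Hnone; eauto | contradiction].
Qed.

(* When an event fires, its fresh preconditions still carry their tokens:
   it did not fire before (it has a precondition), and its conflicting
   partner did not fire (configurations are conflict free). *)
Lemma fresh_precondition_untouched l m t m' A :
  fseq N l m -> fire N m t m' -> proj1_sig A t -> untouched l A.
Proof.
  intros Hl Hfire HAt [x [Hx HAx]].
  destruct (classic (x = t)) as [->|Hxt].
  - destruct (fresh_member_has_pre O A t HAt) as [c Hct].
    exact (event_fires_once l m t c Hl Hx Hct (proj1 Hfire)).
  - apply (configuration_conflict_free (l ++ [t]) m' x t).
    + apply fseq_snoc with m; assumption.
    + apply in_or_app; left; exact Hx.
    + apply in_or_app; right; left; reflexivity.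
    + exact (fresh_pair_conflict O A x t HAx HAt Hxt).
Qed.

Definition sharp_marking (m : marking N) (l : list (ev O)) : marking NS :=
  fun s => match s with
           | inl b => m b
           | inr A => ind (untouched l A)
           end.

Lemma sharp_fseq_of_fseq l m : fseq N l m -> fseq NS l (sharp_marking m l).
Proof.
  induction 1 as [| l m t m' Hl IH Hfire].
  - match goal with |- fseq _ _ ?m0 => replace m0 with (init NS); [exact (fseq_nil NS)|] end.
    apply functional_extensionality. intros [b|A]; [reflexivity|].
    apply (ind_iff True (untouched [] A)). split; [intros _ [x [[] _]] | trivial].
  - apply (fseq_snoc NS l (sharp_marking m l) t); [exact IH|].
    destruct Hfire as [Hen Hm']. split.
    + intros [b|A] Hpre; simpl in Hpre |- *; [exact (Hen b Hpre)|].
      rewrite ind_true; [lia|]. exact (fresh_precondition_untouched l m t m' A Hl (conj Hen Hm') Hpre).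
    + intros [b|A]; [exact (Hm' b)|]. cbn.
      rewrite (ind_iff _ _ (untouched_snoc l t A)). apply ind_and_not.
      exact (fresh_precondition_untouched l m t m' A Hl (conj Hen Hm')).
Qed.


End OccurrenceDynamics.

Lemma sharp_same_configurations (O : ONet) :
  is_occurrence_net O ->
  forall X : ev O -> nat, configuration O X <-> configuration (sharp O) X.
Proof.
  intros [_ [Hsafe [Hunique [Hinit _]]]] X.
  split; intros [l [m [Hl HX]]].
  - exists l, (sharp_marking O m l). split; [exact (sharp_fseq_of_fseq O Hsafe Hunique Hinit l m Hl) | exact HX].
  - exists l, (fun b => m (inl b)). split; [exact (fseq_of_sharp_fseq O l m Hl) | exact HX].
Qed.

Theorem mainTheorem9 (O : ONet) :
  is_occurrence_net O ->
  is_occurrence_net (sharp O) /\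
  (forall X : ev O -> nat, configuration O X <-> configuration (sharp O) X).
Proof.
  intros Hocc. split; [|exact (sharp_same_configurations O Hocc)].
  destruct Hocc as [Hac [Hsafe [Hunique [Hinit [Hanc [Hfin Hcf]]]]]].
  split; [exact (sharp_acyclic O Hac)|].
  split; [exact (sharp_safe O Hsafe)|].
  (* fresh conditions have no producers, so (1) and (2) hold on them *)
  split; [intros [b|A] e e'; simpl; [apply Hunique | tauto]|].
  split; [intros [b|A] Hb e; simpl; [apply Hinit, Hb | tauto]|].
  (* ancestors and finite causes transfer along the embedding *)
  split.
  { intros [b|A]; [|exists (inr A); split; [exact I | left; reflexivity]].
    destruct (Hanc b) as [b' [Hb' Hle]].
    exists (inl b'); split; [exact Hb' | exact (proj2 (sharp_le_emb O (inl b') (inl b)) Hle)]. }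
  split.
  { intros e. destruct (Hfin e) as [causes Hcauses].
    exists causes. intros e' Hle. exact (Hcauses e' (proj1 (sharp_le_emb O (inr e') (inr e)) Hle)). }
  exact (sharp_conflict_irreflexive O Hcf).
Qed.
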